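(* Let $n\in\mathbb{N}$, $R_+>0$, $\delta\in(0,1)$, $\varepsilon:=\delta^2R_+^{-1}$ and $a,b>0$. On $\mathbb{R}^{2+n}$ with coordinates $(t_1,t_2,x)$, let $r=|x|$, $\tau=\sqrt{t_1^2+t_2^2}$, $u=\frac12(\tau-r)$, $v=\frac12(\tau+r)$, $f=-uv=\frac14(|x|^2-t_1^2-t_2^2)$, $\xi:=(1+\varepsilon u)(1-\varepsilon v)=1-\varepsilon r+\varepsilon^2f$, and \[ \zeta_{a,b;\varepsilon}:=\left\{\frac{f}{(1+\varepsilon u)(1-\varepsilon v)}\exp\left[\frac{2bf^{1/2}}{(1-\varepsilon u)^{1/2}(1+\varepsilon v)^{1/2}}\right]\right\}^{2a}. \] Let $x\in\mathbb{R}^n$ with $|x|\le R_+$, and $t,t_1,t_2\in\mathbb{R}$ with $t^2<t_1^2$ and $t_1^2+t_2^2<|x|^2$. Then \[ \frac{f}{\xi}(t,t_2,x)>\frac{f}{\xi}(t_1,t_2,x)\qquad\text{and}\qquad(\zeta_{a,b;\varepsilon}f)(t,t_2,x)>(\zeta_{a,b;\varepsilon}f)(t_1,t_2,x). \] *)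

From HB Require Import structures.
From mathcomp Require Import all_boot all_order all_algebra.
From mathcomp Require Import all_classical all_reals all_analysis.
Set Implicit Arguments. Unset Strict Implicit. Unset Printing Implicit Defensive.
Import Order.TTheory GRing.Theory Num.Theory.
Local Open Scope ring_scope.

Section Defs.
Variables (R : realType) (n : nat).

Definition enorm (x : 'rV[R]_n) : R := Num.sqrt (\sum_(i < n) x 0 i ^+ 2).

Definition rr (t1 t2 : R) (x : 'rV[R]_n) : R := enorm x.
Definition tau (t1 t2 : R) (x : 'rV[R]_n) : R := Num.sqrt (t1 ^+ 2 + t2 ^+ 2).
Definition uu (t1 t2 : R) (x : 'rV[R]_n) : R := (tau t1 t2 x - rr t1 t2 x) / 2.
Definition vv (t1 t2 : R) (x : 'rV[R]_n) : R := (tau t1 t2 x + rr t1 t2 x) / 2.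
Definition ff (t1 t2 : R) (x : 'rV[R]_n) : R := - (uu t1 t2 x * vv t1 t2 x).
Definition xi (eps : R) (t1 t2 : R) (x : 'rV[R]_n) : R :=
  (1 + eps * uu t1 t2 x) * (1 - eps * vv t1 t2 x).
Definition zeta (a b eps : R) (t1 t2 : R) (x : 'rV[R]_n) : R :=
  powR (ff t1 t2 x / xi eps t1 t2 x *
        expR (2 * b * Num.sqrt (ff t1 t2 x) /
              (Num.sqrt (1 - eps * uu t1 t2 x) * Num.sqrt (1 + eps * vv t1 t2 x))))
       (2 * a).
End Defs.

Set Warnings "-notation-overridden,-ambiguous-paths".
From HB Require Import structures.
From mathcomp Require Import all_boot all_order all_algebra.
From mathcomp Require Import all_classical all_reals all_analysis.
From mathcomp Require Import ring lra.
Set Implicit Arguments. Unset Strict Implicit. Unset Printing Implicit Defensive.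
Import Order.TTheory GRing.Theory Num.Theory.
Local Open Scope ring_scope.

(* With r = |x| fixed, f = (r^2 - t1^2 - t2^2)/4 strictly increases when t1^2
   is replaced by the smaller t^2, and both
   (1 + eps u)(1 - eps v) = 1 - eps r + eps^2 f and
   (1 - eps u)(1 + eps v) = 1 + eps r + eps^2 f are affine in f.  As eps r < 1,
   the maps F |-> F / (1 -+ eps r + eps^2 F) increase on F > 0, so f/xi and
   zeta f are increasing functions of f alone. *)

Lemma ltr_div_affine (R : realFieldType) (c k : R) : 0 < c -> 0 <= k ->
  {in Num.pos &, {homo (fun F => F / (c + k * F)) : F1 F / F1 < F}}.
Proof.
move=> c_gt0 k_ge0 F1 F; rewrite !posrE => F1_gt0 F_gt0 F1F.
have den1_gt0 : 0 < c + k * F1 by nra.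
have den_gt0 : 0 < c + k * F by nra.
by rewrite ltr_pdivrMr // mulrAC ltr_pdivlMr //; nra.
Qed.

Definition zeta_profile (R : realType) (a b eps r F : R) : R :=
  powR (F / (1 - eps * r + eps ^+ 2 * F) *
        expR (2 * b * Num.sqrt (F / (1 + eps * r + eps ^+ 2 * F)))) (2 * a).

Section Coordinates.
Variables (R : realType) (n : nat).
Implicit Types (eps : R) (x : 'rV[R]_n).

Lemma enorm_ge0 x : 0 <= enorm x.
Proof. exact: sqrtr_ge0. Qed.

Lemma ffE (t1 t2 : R) x : ff t1 t2 x = (enorm x ^+ 2 - (t1 ^+ 2 + t2 ^+ 2)) / 4.
Proof.
have tau_sqr : tau t1 t2 x ^+ 2 = t1 ^+ 2 + t2 ^+ 2.
  by rewrite sqr_sqrtr // addr_ge0 // sqr_ge0.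
by rewrite -tau_sqr /ff /uu /vv /rr; field.
Qed.

Lemma xiE eps (t1 t2 : R) x :
  xi eps t1 t2 x = 1 - eps * enorm x + eps ^+ 2 * ff t1 t2 x.
Proof. by rewrite /xi /ff /uu /vv /rr; field. Qed.

Lemma dual_xiE eps (t1 t2 : R) x :
  (1 - eps * uu t1 t2 x) * (1 + eps * vv t1 t2 x) =
  1 + eps * enorm x + eps ^+ 2 * ff t1 t2 x.
Proof. by rewrite /ff /uu /vv /rr; field. Qed.

Lemma zetaE (a b : R) eps (t1 t2 : R) x : 0 <= eps -> 0 <= ff t1 t2 x ->
  zeta a b eps t1 t2 x = zeta_profile a b eps (enorm x) (ff t1 t2 x).
Proof.
move=> eps_ge0 ff_ge0.
have vv_ge0 : 0 <= vv t1 t2 x by rewrite /vv /tau /rr divr_ge0 ?addr_ge0 ?sqrtr_ge0.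
have dual_gt0 : 0 < 1 + eps * enorm x + eps ^+ 2 * ff t1 t2 x.
  have := mulr_ge0 eps_ge0 (enorm_ge0 x).
  have := mulr_ge0 (sqr_ge0 eps) ff_ge0.
  lra.
have uu_factor_ge0 : 0 <= 1 - eps * uu t1 t2 x.
  have : 0 < 1 + eps * vv t1 t2 x by nra.
  by rewrite -(dual_xiE eps t1 t2 x) in dual_gt0; nra.
rewrite /zeta /zeta_profile xiE -sqrtrM // dual_xiE.
by rewrite sqrtrM // sqrtrV ?ltW // !mulrA.
Qed.

End Coordinates.

Lemma ltr_zeta_profile_mul (R : realType) (a b eps r F1 F : R) :
  0 < a -> 0 < b -> 0 <= eps -> 0 <= r -> eps * r < 1 -> 0 < F1 -> F1 < F ->
  zeta_profile a b eps r F1 * F1 < zeta_profile a b eps r F * F.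
Proof.
move=> a_gt0 b_gt0 eps_ge0 r_ge0 epsr_lt1 F1_gt0 F1F.
have F_gt0 : 0 < F by lra.
have k_ge0 : 0 <= eps ^+ 2 by exact: sqr_ge0.
have c_gt0 : 0 < 1 - eps * r by lra.
have d_gt0 : 0 < 1 + eps * r by have := mulr_ge0 eps_ge0 r_ge0; lra.
have pos_div (c G : R) : 0 < c -> 0 < G -> 0 < G / (c + eps ^+ 2 * G).
  by move=> ? ?; rewrite divr_gt0 // ltr_wpDr // mulr_ge0 // ltW.
have ratio_lt := ltr_div_affine c_gt0 k_ge0.
have exp_lt : expR (2 * b * Num.sqrt (F1 / (1 + eps * r + eps ^+ 2 * F1))) <
              expR (2 * b * Num.sqrt (F / (1 + eps * r + eps ^+ 2 * F))).
  rewrite ltr_expR ltr_pM2l ?mulr_gt0 // ltr_sqrt ?pos_div //.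
  by rewrite (ltr_div_affine d_gt0 k_ge0) ?posrE.
have inner_lt :
  F1 / (1 - eps * r + eps ^+ 2 * F1) *
    expR (2 * b * Num.sqrt (F1 / (1 + eps * r + eps ^+ 2 * F1))) <
  F / (1 - eps * r + eps ^+ 2 * F) *
    expR (2 * b * Num.sqrt (F / (1 + eps * r + eps ^+ 2 * F))).
  apply: ltr_pM exp_lt; first exact/ltW/pos_div.
  - exact/ltW/expR_gt0.
  - by rewrite ratio_lt ?posrE.
apply: ltr_pM _ (ltW F1_gt0) _ F1F; first exact: powR_ge0.
apply: gt0_ltr_powR inner_lt; rewrite ?mulr_gt0 // nnegrE ltW //.
- by rewrite mulr_gt0 ?expR_gt0 ?pos_div.
- by rewrite mulr_gt0 ?expR_gt0 ?pos_div.
Qed.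

Theorem lemma4p4 (R : realType) (n : nat) (Rplus delta a b : R)
  (x : 'rV[R]_n) (t t1 t2 : R) :
  0 < Rplus -> 0 < delta < 1 -> 0 < a -> 0 < b ->
  enorm x <= Rplus ->
  t ^+ 2 < t1 ^+ 2 ->
  t1 ^+ 2 + t2 ^+ 2 < enorm x ^+ 2 ->
  let eps := delta ^+ 2 / Rplus in
  ff t t2 x / xi eps t t2 x > ff t1 t2 x / xi eps t1 t2 x /\
  zeta a b eps t t2 x * ff t t2 x > zeta a b eps t1 t2 x * ff t1 t2 x.
Proof.
move=> Rplus_gt0 /andP[delta_gt0 delta_lt1] a_gt0 b_gt0 x_le tt1 t1t2_lt eps.
have eps_ge0 : 0 <= eps by rewrite divr_ge0 ?sqr_ge0 ?ltW.
have epsr_lt1 : eps * enorm x < 1.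
  have : eps * enorm x <= delta ^+ 2.
    by rewrite /eps mulrAC ler_pdivrMr // ler_pM2l // exprn_gt0.
  have : delta ^+ 2 < 1 by rewrite expr_lt1 ?ltW.
  lra.
have ff1_gt0 : 0 < ff t1 t2 x by rewrite ffE; lra.
have ff_lt : ff t1 t2 x < ff t t2 x by rewrite !ffE; lra.
have ff_gt0 : 0 < ff t t2 x by lra.
have c_gt0 : 0 < 1 - eps * enorm x by lra.
split; first by rewrite !xiE (ltr_div_affine c_gt0 (sqr_ge0 eps)) ?posrE.
rewrite (zetaE _ _ eps_ge0 (ltW ff1_gt0)) (zetaE _ _ eps_ge0 (ltW ff_gt0)).
by rewrite ltr_zeta_profile_mul ?enorm_ge0.
Qed.
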